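(* Let $\lambda$ be a partition and let $k\geq 3$ be an integer. If $1\leq \ell(\lambda)\leq k-2$ and $\lambda\neq (1),(2),(1,1)$, then \[ \frac{s_\lambda(1^k)}{k}\geq \frac{s_\lambda(1^{k-1})}{k-1}+1. \]
   Context: $s_\lambda$ is the Schur polynomial of $\lambda$, and $s_\lambda(1^m)$ denotes its evaluation at $(1,\dots,1)$ with $m$ ones; equivalently, $s_\lambda(1^m)$ is the number of semistandard Young tableaux of shape $\lambda$ with entries in $\{1,\dots,m\}$ (rows weakly increasing left to right, columns strictly increasing top to bottom). $\ell(\lambda)$ is the number of nonzero parts of $\lambda$. *)

From HB Require Import structures.
From mathcomp Require Import all_boot all_order all_algebra.
Set Implicit Arguments. Unset Strict Implicit. Unset Printing Implicit Defensive.

Definition is_partition (la : seq nat) : bool :=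
  sorted geq la && all (fun x => 0 < x) la.

Definition plength (la : seq nat) : nat := count (fun x => 0 < x) la.

Definition nrows (la : seq nat) : nat := size la.
Definition ncols (la : seq nat) : nat := foldr maxn 0 la.

Definition in_shape (la : seq nat) (i j : nat) : bool := j < nth 0 la i.

(* A filling of the bounding box with entries in 'I_m (entry e stands for
   the value e+1 in {1,...,m}); cells outside the diagram are forced to 0 so
   that fillings correspond bijectively to tableaux. *)
Definition is_ssyt (la : seq nat) (m : nat)
    (T : {ffun 'I_(nrows la) * 'I_(ncols la) -> 'I_m}) : bool :=
  [forall c : 'I_(nrows la) * 'I_(ncols la),
     ~~ in_shape la c.1 c.2 ==> (val (T c) == 0)] &&
  [forall i : 'I_(nrows la), forall j1 : 'I_(ncols la), forall j2 : 'I_(ncols la),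
     (in_shape la i j1 && in_shape la i j2 && (j1 <= j2)) ==>
       (T (i, j1) <= T (i, j2))] &&
  [forall i1 : 'I_(nrows la), forall i2 : 'I_(nrows la), forall j : 'I_(ncols la),
     (in_shape la i1 j && in_shape la i2 j && (i1 < i2)) ==>
       (T (i1, j) < T (i2, j))].

(* s_la(1^m) = number of semistandard Young tableaux of shape la with
   entries in {1,...,m}. *)
Definition schur_ones (la : seq nat) (m : nat) : nat :=
  #|[set T : {ffun 'I_(nrows la) * 'I_(ncols la) -> 'I_m} | is_ssyt T]|.

(* Write k = K + 1 and let v(T) be the number of distinct entries of a tableau T with
   entries in [k]; splitting k - 1 = (k - v(T)) + (v(T) - 1) and summing over T gives
   (k - 1) s(1^k) = sum_T (k - v(T)) + sum_T (v(T) - 1).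
   The first sum counts pairs (T, i) with i not an entry of T; relabelling [k - 1] onto
   [k] \ {i} shows that each i contributes at least s(1^(k-1)), so it is at least
   k s(1^(k-1)).  The second sum is at least k (k - 1), witnessed by families of tableaux
   indexed by sets of entries: for l(la) >= 3 fill row i with the i-th element of an
   l(la)-set, using (l - 1) C(k, l) >= 2 C(k, 2); for one row of length >= 3 take two
   fillings per 2-set, and for two rows with la_1 >= 2 two fillings per 3-set.
   Dividing (k - 1) s(1^k) >= k s(1^(k-1)) + k (k - 1) by k (k - 1) gives the claim. *)

From mathcomp Require Import all_boot all_order all_algebra.
From mathcomp Require Import zify ring.
Import Order.TTheory GRing.Theory Num.Theory.
Set Implicit Arguments. Unset Strict Implicit. Unset Printing Implicit Defensive.

Lemma sum_indicator (I : finType) (A : {pred I}) (P : pred I) :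
  \sum_(x in A) (P x : nat) = #|[set x in A | P x]|.
Proof. by rewrite -sum1dep_card big_mkcondr /=; apply: eq_bigr => x _; case: (P x). Qed.

Section NthElem.
Variable K : nat.
Implicit Type S : {set 'I_K.+1}.

Definition nth_elem S i := nth ord0 (enum S) i.

Lemma nth_elem_ltn S i j : i < j -> j < #|S| -> nth_elem S i < nth_elem S j.
Proof.
move=> ij jS; have enum_sorted : sorted (fun x y : 'I_K.+1 => x < y) (enum S).
  rewrite -(@sorted_map _ _ val ltn) -[enum _](eq_filter (mem_enum _)).
  rewrite -(eq_filter (mem_map val_inj _)) -filter_map.
  by rewrite (sorted_filter ltn_trans) // unlock val_ord_enum iota_ltn_sorted.
rewrite cardE in jS.
apply: (sorted_ltn_nth (fun _ _ _ => @ltn_trans _ _ _) ord0 enum_sorted) => //.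
by rewrite inE (ltn_trans ij).
Qed.

Lemma mem_nth_elem S i : i < #|S| -> nth_elem S i \in S.
Proof. by move=> iS; rewrite -mem_enum mem_nth // -cardE. Qed.

Lemma nth_elemP S x : x \in S -> exists2 i, i < #|S| & x = nth_elem S i.
Proof.
move=> xS; exists (index x (enum S)); first by rewrite cardE index_mem mem_enum.
by rewrite /nth_elem nth_index // mem_enum.
Qed.

End NthElem.

Notation cell la := ('I_(nrows la) * 'I_(ncols la))%type.

Section Tableaux.
Variable la : seq nat.

Definition ssyt_set m := [set T : {ffun cell la -> 'I_m} | is_ssyt T].
Definition shape := [pred c : cell la | in_shape la c.1 c.2].
Definition tab_values m (T : {ffun cell la -> 'I_m}) : {set 'I_m} := [set T c | c in shape].

Definition rows_nondecreasing m (G : cell la -> 'I_m) :=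
  forall (i : 'I_(nrows la)) (j1 j2 : 'I_(ncols la)),
    in_shape la i j1 -> in_shape la i j2 -> j1 <= j2 -> G (i, j1) <= G (i, j2).

Definition cols_increasing m (G : cell la -> 'I_m) :=
  forall (i1 i2 : 'I_(nrows la)) (j : 'I_(ncols la)),
    in_shape la i1 j -> in_shape la i2 j -> i1 < i2 -> G (i1, j) < G (i2, j).

Lemma ssytP m (T : {ffun cell la -> 'I_m}) :
  reflect [/\ forall c : cell la, ~~ in_shape la c.1 c.2 -> val (T c) = 0,
              rows_nondecreasing T & cols_increasing T]
          (T \in ssyt_set m).
Proof.
rewrite inE /is_ssyt -andbA.
apply: (iffP and3P) => [[/forallP out /forallP row /forallP col]|[out row col]].
  split=> [c /(implyP (out c))/eqP //|i j1 j2 h1 h2 h|i1 i2 j h1 h2 h].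
    by move/forallP/(_ j1)/forallP/(_ j2)/implyP: (row i); apply; rewrite h1 h2 h.
  by move/forallP/(_ i2)/forallP/(_ j)/implyP: (col i1); apply; rewrite h1 h2 h.
split; [apply/forallP=> c|apply/forallP=> i|apply/forallP=> i1].
- by apply/implyP => /out ->.
- by do 2!apply/forallP=> ?; apply/implyP => /andP[/andP[? ?] ?]; apply: row.
- by do 2!apply/forallP=> ?; apply/implyP => /andP[/andP[? ?] ?]; apply: col.
Qed.

Definition fill_shape K (G : cell la -> 'I_K.+1) : {ffun cell la -> 'I_K.+1} :=
  [ffun c : cell la => if in_shape la c.1 c.2 then G c else ord0].

Lemma fill_shape_ssyt K (G : cell la -> 'I_K.+1) :
  rows_nondecreasing G -> cols_increasing G -> fill_shape G \in ssyt_set K.+1.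
Proof.
move=> row col; apply/ssytP; split=> [c|i j1 j2 h1 h2|i1 i2 j h1 h2]; rewrite !ffunE /=.
- by move/negbTE ->.
- by rewrite h1 h2; apply: row.
- by rewrite h1 h2; apply: col.
Qed.

Lemma in_shape_size i j : in_shape la i j -> i < size la.
Proof. by rewrite /in_shape; case: (ltnP i (size la)) => // /(nth_default 0) ->. Qed.

Lemma nth_le_ncols i : nth 0 la i <= ncols la.
Proof.
rewrite /ncols; elim: la i => [|a l IHl] [|i] //=; first exact: leq_maxl.
exact: leq_trans (IHl i) (leq_maxr _ _).
Qed.

Lemma in_shape_cellP i j :
  in_shape la i j -> exists2 c : cell la, c \in shape & (val c.1, val c.2) = (i, j).
Proof.
move=> ij; have jn := leq_trans ij (nth_le_ncols i).
by exists (Ordinal (in_shape_size ij), Ordinal jn).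
Qed.

Lemma tab_values_fill K (F : nat -> nat -> 'I_K.+1) (S : {set 'I_K.+1}) :
  (forall i j, in_shape la i j -> F i j \in S) ->
  (forall k, k < #|S| -> exists2 p, in_shape la p.1 p.2 & F p.1 p.2 = nth_elem S k) ->
  tab_values (fill_shape (fun c : cell la => F c.1 c.2)) = S.
Proof.
move=> FS Fonto; apply/setP => x; apply/imsetP/idP => [[c cla ->]|xS].
  by rewrite ffunE ifT ?FS.
have [k kS ->] := nth_elemP xS; have [[i j] /= ij <-] := Fonto k kS.
by have [c cla [<- <-]] := in_shape_cellP ij; exists c; rewrite // ffunE ifT.
Qed.

Lemma fill_shape_eq_at K (F1 F2 : nat -> nat -> 'I_K.+1) i j :
  in_shape la i j ->
  fill_shape (fun c : cell la => F1 c.1 c.2) = fill_shape (fun c : cell la => F2 c.1 c.2) ->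
  F1 i j = F2 i j.
Proof.
case/in_shape_cellP=> c cla [<- <-] /ffunP/(_ c).
by rewrite !ffunE !ifT.
Qed.

Lemma schur_ones_le_avoiding K (i : 'I_K.+1) :
  schur_ones la K <= #|[set T in ssyt_set K.+1 | i \notin tab_values T]|.
Proof.
pose relabel (T : {ffun cell la -> 'I_K}) := fill_shape (fun c => lift i (T c)).
have relabel_inj : {in ssyt_set K &, injective relabel}.
  move=> T1 T2 /ssytP[out1 _ _] /ssytP[out2 _ _] /ffunP E; apply/ffunP => c.
  move: (E c); rewrite !ffunE; case: ifPn => [_|cla _]; first exact: lift_inj.
  by apply: val_inj; rewrite out1 ?out2.
rewrite -[schur_ones _ _](card_in_imset relabel_inj).
apply/subset_leq_card/subsetP => _ /imsetP[T /ssytP[_ row col] ->].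
rewrite inE; apply/andP; split.
  apply: fill_shape_ssyt => [r j1 j2 h1 h2 h|r1 r2 j h1 h2 h] /=.
    by rewrite leq_bump2 row.
  by rewrite ltnNge leq_bump2 -ltnNge col.
by apply/imsetP => -[c cla]; rewrite ffunE ifT //; apply/eqP/neq_lift.
Qed.

Lemma sum_unused_values_ge K :
  K.+1 * schur_ones la K <= \sum_(T in ssyt_set K.+1) (K.+1 - #|tab_values T|).
Proof.
have unused (T : {ffun cell la -> 'I_K.+1}) :
    K.+1 - #|tab_values T| = \sum_(i in [set: 'I_K.+1]) (i \notin tab_values T).
  have := cardsC (tab_values T); rewrite card_ord sum_indicator => {1}<-; rewrite addKn.
  by apply: eq_card => i; rewrite !inE.
rewrite (eq_bigr _ (fun T _ => unused T)) exchange_big /=.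
have -> : K.+1 * schur_ones la K = \sum_(i in [set: 'I_K.+1]) schur_ones la K.
  by rewrite sum_nat_const cardsT card_ord mulnC.
by apply: leq_sum => i _; rewrite sum_indicator schur_ones_le_avoiding.
Qed.

Lemma sum_used_values_family K r (I : finType)
    (g : {set 'I_K.+1} -> I -> {ffun cell la -> 'I_K.+1}) :
  (forall (S : {set 'I_K.+1}) t, #|S| = r -> g S t \in ssyt_set K.+1) ->
  (forall (S : {set 'I_K.+1}) t, #|S| = r -> tab_values (g S t) = S) ->
  (forall S : {set 'I_K.+1}, #|S| = r -> injective (g S)) ->
  r.-1 * (#|I| * 'C(K.+1, r)) <= \sum_(T in ssyt_set K.+1) (#|tab_values T| - 1).
Proof.
move=> g_ssyt g_values g_inj.
pose D := setX [set S : {set 'I_K.+1} | #|S| == r] [set: I].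
have cardD : #|D| = #|I| * 'C(K.+1, r) by rewrite cardsX card_draws card_ord cardsT mulnC.
have gD_inj : {in D &, injective (fun p => g p.1 p.2)}.
  move=> [S1 t1] [S2 t2]; rewrite !inE /= !andbT => /eqP S1r /eqP S2r E.
  have eqS : S1 = S2 by rewrite -(g_values S1 t1) // -(g_values S2 t2) // E.
  by subst S2; rewrite (g_inj S1 S1r _ _ E).
apply: (@leq_trans (\sum_(T in [set g p.1 p.2 | p in D]) (#|tab_values T| - 1))).
  rewrite big_imset //= -cardD mulnC -sum_nat_const; apply/leq_sum => -[S t].
  by rewrite !inE andbT => /eqP Sr; rewrite g_values // Sr subn1.
apply: (sub_le_big leqnn (fun m n => leq_addr n m)) => T /imsetP[[S t] + ->].
by case/setXP; rewrite inE => /eqP Sr _; apply: g_ssyt.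
Qed.

Lemma in_shape_first_col i : is_partition la -> i < size la -> in_shape la i 0.
Proof. by case/andP=> _ /(all_nthP 0); apply. Qed.

Lemma sum_used_values_columns K : is_partition la ->
  (size la).-1 * 'C(K.+1, size la) <= \sum_(T in ssyt_set K.+1) (#|tab_values T| - 1).
Proof.
move=> la_part.
have := @sum_used_values_family K (size la) unit
  (fun S _ => fill_shape (fun c : cell la => nth_elem S c.1)).
rewrite card_unit mul1n; apply=> [S _ Sla|S _ Sla|S _ [] []] //.
  apply: fill_shape_ssyt => [i j1 j2 _ _ _|i1 i2 j _ ij2 i12] //=.
  by apply: nth_elem_ltn; rewrite // Sla (in_shape_size ij2).
apply: (@tab_values_fill K (fun i _ => nth_elem S i)) => [i j /in_shape_size|k kS].
  by rewrite -Sla; apply: mem_nth_elem.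
by exists (k, 0); rewrite //= in_shape_first_col // -Sla.
Qed.

Lemma tab_values_gt0 K (T : {ffun cell la -> 'I_K.+1}) :
  is_partition la -> 0 < size la -> 0 < #|tab_values T|.
Proof.
move=> la_part la_gt0; have [c cla _] := in_shape_cellP (in_shape_first_col la_part la_gt0).
by apply/card_gt0P; exists (T c); apply: imset_f.
Qed.

Lemma sum_unused_add_used K : is_partition la -> 0 < size la ->
  \sum_(T in ssyt_set K.+1) (K.+1 - #|tab_values T|) +
  \sum_(T in ssyt_set K.+1) (#|tab_values T| - 1) = K * schur_ones la K.+1.
Proof.
move=> la_part la_gt0; rewrite -big_split /= mulnC -sum_nat_const.
apply: eq_bigr => T _; have values_gt0 := tab_values_gt0 T la_part la_gt0.
have values_le : #|tab_values T| <= K.+1 by have := max_card (tab_values T); rewrite card_ord.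
by rewrite addnBA // subnK // subn1.
Qed.

End Tableaux.

Lemma sum_used_values_one_row K n : 2 < n ->
  2 * 'C(K.+1, 2) <= \sum_(T in ssyt_set [:: n] K.+1) (#|tab_values T| - 1).
Proof.
move=> n_gt2.
pose F (S : {set 'I_K.+1}) (t : bool) (i j : nat) :=
  if j <= t then nth_elem S 0 else nth_elem S 1.
have := @sum_used_values_family [:: n] K 2 bool
  (fun S t => fill_shape (fun c : cell [:: n] => F S t c.1 c.2)).
rewrite card_bool mul1n; apply=> [S t S2|S t S2|S S2 t1 t2].
- have xy : nth_elem S 0 < nth_elem S 1 by apply: nth_elem_ltn; rewrite ?S2.
  apply: fill_shape_ssyt => [i j1 j2 _ _ j12|i1 i2 j _ /in_shape_size /= i2_0 i12]; last lia.
  by rewrite /F; case: (leqP j1 t); case: (leqP j2 t) => //; lia.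
- apply: (@tab_values_fill [:: n] K (F S t)) => [i j _|k]; rewrite ?S2.
    by rewrite /F; case: ifP => _; apply: mem_nth_elem; rewrite S2.
  case: k => [|[|//]] _.
    by exists (0, 0); rewrite /F /in_shape //=; lia.
  by exists (0, 2); rewrite /F /in_shape //=; case: t.
- have xy : nth_elem S 0 < nth_elem S 1 by apply: nth_elem_ltn; rewrite ?S2.
  move/(@fill_shape_eq_at [:: n] K _ _ 0 1); rewrite /F /in_shape /=.
  case: t1; case: t2 => // /(_ (ltnW n_gt2)); rewrite ?leqnn ?ltnn /= => xy_eq;
    by rewrite xy_eq ltnn in xy.
Qed.

Lemma sum_used_values_two_rows K a b : 0 < b -> b <= a -> 1 < a ->
  2 * (2 * 'C(K.+1, 3)) <= \sum_(T in ssyt_set [:: a; b] K.+1) (#|tab_values T| - 1).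
Proof.
move=> b_gt0 ba a_gt1.
(* [t] chooses between the rows  x..x y / z..z  and  x..x z..z / y z..z, where in the
   second tableau the z's of the first row start at column b. *)
pose F (S : {set 'I_K.+1}) (t : bool) (i j : nat) :=
  let: (x, y, z) := (nth_elem S 0, nth_elem S 1, nth_elem S 2) in
  if t then (if i == 0 then (if j < a.-1 then x else y) else z)
  else (if i == 0 then (if j < b then x else z) else (if j == 0 then y else z)).
have := @sum_used_values_family [:: a; b] K 3 bool
  (fun S t => fill_shape (fun c : cell [:: a; b] => F S t c.1 c.2)).
rewrite card_bool; apply=> [S t S3|S t S3|S S3 t1 t2].
- have xy : nth_elem S 0 < nth_elem S 1 by apply: nth_elem_ltn; rewrite ?S3.
  have yz : nth_elem S 1 < nth_elem S 2 by apply: nth_elem_ltn; rewrite ?S3.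
  apply: fill_shape_ssyt => [[[|[|//]] ?] j1 j2|[i1 ?] [[|[|//]] ?] j];
    rewrite /in_shape /F /=; case: t; repeat case: ifP; lia.
- apply: (@tab_values_fill [:: a; b] K (F S t)) => [i j _|k]; rewrite ?S3.
    by rewrite /F; case: t; repeat case: ifP => _; apply: mem_nth_elem; rewrite S3.
  case: k => [|[|[|//]]] _.
  + exists (0, 0); rewrite /F /in_shape /=; first lia.
    by case: t; rewrite ifT //; lia.
  + case: t; last by exists (1, 0).
    by exists (0, a.-1); rewrite /F /in_shape /= ?ltnn //; lia.
  + case: t; first by exists (1, 0).
    have [b_lt_a|a_le_b] := ltnP b a; first by exists (0, b); rewrite /F /in_shape /= ?ltnn.
    by exists (1, 1); rewrite /F /in_shape //=; lia.
- have yz : nth_elem S 1 < nth_elem S 2 by apply: nth_elem_ltn; rewrite ?S3.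
  move/(@fill_shape_eq_at [:: a; b] K _ _ 1 0); rewrite /F /in_shape /=.
  case: t1; case: t2 => // /(_ b_gt0) yz_eq; by rewrite yz_eq ltnn in yz.
Qed.

Lemma bin2_le_bin n r : 2 <= r -> r <= n - 2 -> 'C(n, 2) <= 'C(n, r).
Proof.
have up s : 2 <= s -> 2 * s <= n -> 'C(n, 2) <= 'C(n, s).
  elim: s => [|s IHs] // s_ge2 s_le; have [s_gt2|] := ltnP 2 s.+1; last first.
    by move=> s_le2; have -> : s.+1 = 2 by lia.
  by apply: leq_trans (IHs _ _) _; [lia|lia|have := mul_bin_left n s; nia].
move=> r_ge2 r_le; have [|n_lt] := leqP (2 * r) n; first exact: up.
by rewrite -[X in _ <= X]bin_sub; [apply: up|]; lia.
Qed.

Lemma sum_used_values_ge K la : is_partition la -> 1 <= size la <= K.+1 - 2 ->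
  la != [:: 1] -> la != [:: 2] -> la != [:: 1; 1] ->
  K.+1 * K <= \sum_(T in ssyt_set la K.+1) (#|tab_values T| - 1).
Proof.
move=> la_part /andP[la_gt0 la_le].
have bin2K := mul_bin_left K.+1 1; rewrite bin1 /= subn1 in bin2K.
case: la la_part la_gt0 la_le => [|a [|b [|c l]]] //= la_part _ la_le.
- move=> la_n1 la_n2 _; have a_gt0 : 0 < a := in_shape_first_col la_part (isT : 0 < 1).
  have a_gt2 : 2 < a by move: la_n1 la_n2; rewrite !eqseq_cons !andbT; lia.
  by apply: leq_trans (sum_used_values_one_row K a_gt2); lia.
- move=> _ _ la_n11; have b_gt0 : 0 < b := in_shape_first_col la_part (isT : 1 < 2).
  have ba : b <= a by case/andP: la_part => /andP[].
  have a_gt1 : 1 < a by move: la_n11; rewrite !eqseq_cons !andbT; lia.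
  apply: leq_trans (sum_used_values_two_rows K b_gt0 ba a_gt1).
  by have := mul_bin_left K.+1 2; nia.
- move=> _ _ _; apply: leq_trans (sum_used_values_columns K la_part) => /=.
  by have := @bin2_le_bin K.+1 (size l).+3 isT la_le; nia.
Qed.

Lemma ler_div_add1 (R : numFieldType) (m a b : nat) :
  0 < m -> m.+1 * a + m.+1 * m <= m * b -> (a%:R / m%:R + 1 <= b%:R / m.+1%:R :> R)%R.
Proof.
move=> m_gt0 ab; have m_neq0 : (m%:R != 0 :> R)%R by rewrite pnatr_eq0 -lt0n.
have m1_neq0 : (m.+1%:R != 0 :> R)%R by rewrite pnatr_eq0.
have -> : (a%:R / m%:R + 1 = (m.+1 * a + m.+1 * m)%:R / (m * m.+1)%:R :> R)%R.
  by rewrite !natrD !natrM; field; rewrite nat1r m_neq0 m1_neq0.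
have -> : (b%:R / m.+1%:R = (m * b)%:R / (m * m.+1)%:R :> R)%R.
  by rewrite !natrM; field; rewrite nat1r m_neq0 m1_neq0.
by rewrite ler_pM2r ?invr_gt0 ?ltr0n ?ler_nat ?muln_gt0 ?m_gt0.
Qed.

Theorem lemma4p4 (la : seq nat) (k : nat) :
  is_partition la -> 3 <= k ->
  1 <= plength la <= k - 2 ->
  la != [:: 1] -> la != [:: 2] -> la != [:: 1; 1] ->
  ((schur_ones la (k - 1))%:R / (k - 1)%:R + 1 <=
     (schur_ones la k)%:R / k%:R :> rat)%R.
Proof.
move=> la_part k_ge3 la_len la_n1 la_n2 la_n11.
case: k k_ge3 la_len => [//|K] K_ge2; rewrite subn1 /=.
have -> : plength la = size la by case/andP: la_part => _; rewrite all_count => /eqP.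
move=> la_len; have la_gt0 : 0 < size la by case/andP: la_len.
apply: ler_div_add1; first exact: ltnW K_ge2.
rewrite -(sum_unused_add_used K la_part la_gt0) leq_add //.
  exact: sum_unused_values_ge.
exact: sum_used_values_ge.
Qed.
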